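(* For every $t\in\mathbb Q_{\ge0}\cup\{\infty\}$ (written as a reduced fraction $p/q$ with $p,q\ge0$, $\infty=\frac10$), the word $\omega_t$ is a reduced word in the free group on $\{x,y,z\}$.
   Context: Modified lattice: the planar graph with vertex set $\mathbb Z^2$ whose edges are the horizontal unit segments $[(i,j),(i+1,j)]$, the vertical unit segments $[(i,j),(i,j+1)]$, and the diagonal segments of slope $-1$ joining $(i,j+1)$ and $(i+1,j)$. Words $\omega_t$: set $\omega_{0/1}=x$, $\omega_{1/0}=z$. For a reduced fraction $t=p/q\in(0,\infty)$, let $L_t$ be the segment from $(0,0)$ to $(q,p)$, oriented from $(0,0)$ to $(q,p)$. List the edges of the modified lattice whose relative interior meets $L_t$, in the order of the intersection points along $L_t$. A horizontal (resp. diagonal, vertical) edge contributes the letter $x$ (resp. $y$, $z$) if the midpoint of the edge is not on the right-hand side of the oriented segment $L_t$ (including the case that the midpoint lies on $L_t$), and contributes $x^{-1}$ (resp. $y^{-1}$, $z^{-1}$) if the midpoint is on the right-hand side. The word $\omega_t$ is the concatenation of these letters in order. *)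

From HB Require Import structures.
From mathcomp Require Import all_boot all_order all_algebra.
Set Implicit Arguments. Unset Strict Implicit. Unset Printing Implicit Defensive.
Import Order.TTheory GRing.Theory Num.Theory.
Local Open Scope ring_scope.

Inductive gen := gx | gy | gz.
Definition gen_code (g : gen) : nat := match g with gx => 0 | gy => 1 | gz => 2 end%N.
Definition gen_decode (n : nat) : gen := match n with 0 => gx | 1 => gy | _ => gz end%N.
Lemma gen_codeK : cancel gen_code gen_decode. Proof. by case. Qed.
HB.instance Definition _ := Equality.copy gen (can_type gen_codeK).

(* a letter: (generator, true) = g, (generator, false) = g^{-1} *)
Definition letter := (gen * bool)%type.
Definition word := seq letter.

Fixpoint reduced (w : word) : bool :=
  match w with
  | a :: ((b :: _) as w') => ~~ ((a.1 == b.1) && (a.2 != b.2)) && reduced w'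
  | _ => true
  end.

Inductive ekind := EH | ED | EV.
Definition edge := (ekind * (int * int))%type.
Definition pt := (rat * rat)%type.

Definition edge_ends (e : edge) : pt * pt :=
  let: (k, (i, j)) := e in
  let i' : rat := i%:~R in let j' : rat := j%:~R in
  match k with
  | EH => ((i', j'), (i' + 1, j'))
  | ED => ((i', j' + 1), (i' + 1, j'))
  | EV => ((i', j'), (i', j' + 1))
  end.

Definition edge_gen (e : edge) : gen :=
  match e.1 with EH => gx | ED => gy | EV => gz end.

(* The edges that can possibly meet the segment from (0,0) to (q,p): all edges
   with base vertex (i,j), -1 <= i <= q, -1 <= j <= p (every edge whose closure
   meets the box [0,q]x[0,p] is of this form). *)
Definition irange (n : nat) : seq int := [seq (k%:Z - 1)%R | k <- iota 0 (n + 2)].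
Definition candidate_edges (p q : nat) : seq edge :=
  [seq (k, ij) | k <- [:: EH; ED; EV], ij <- [seq (i, j) | i <- irange q, j <- irange p]].

(* Parameter s in [0,1] of the intersection point s*(q,p) of the closed segment
   L from (0,0) to P=(q,p) with the relative interior of edge e, when the two
   are not parallel (Cramer's rule); None if they do not meet (or are parallel,
   which never happens for p,q >= 1). *)
Definition cross_param (p q : nat) (e : edge) : option rat :=
  let: (A, B) := edge_ends e in
  let Px : rat := q%:R in let Py : rat := p%:R in
  let dx := B.1 - A.1 in let dy := B.2 - A.2 in
  let det := dx * Py - Px * dy in
  if det == 0 then None else
  let s := (dx * A.2 - A.1 * dy) / det in
  let u := (Px * A.2 - Py * A.1) / det in
  if (0 <= s) && (s <= 1) && (0 < u) && (u < 1) then Some s else None.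

Definition edge_sign (p q : nat) (e : edge) : bool :=
  let: (A, B) := edge_ends e in
  let Mx := (A.1 + B.1) / 2 in let My := (A.2 + B.2) / 2 in
  0 <= (q%:R : rat) * My - (p%:R : rat) * Mx.

Definition crossings (p q : nat) : seq (rat * letter) :=
  pmap (fun e => match cross_param p q e with
                 | Some s => Some (s, (edge_gen e, edge_sign p q e))
                 | None => None end) (candidate_edges p q).

Definition omega (p q : nat) : word :=
  if p == 0%N then [:: (gx, true)]
  else if q == 0%N then [:: (gz, true)]
  else [seq c.2 | c <- sort (fun a b : rat * letter => a.1 <= b.1) (crossings p q)].

From HB Require Import structures.
From mathcomp Require Import all_boot all_order all_algebra.
From mathcomp Require Import ring lra zify.
Set Implicit Arguments. Unset Strict Implicit. Unset Printing Implicit Defensive.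
Import Order.TTheory GRing.Theory Num.Theory.
Local Open Scope ring_scope.

(** The letters of [omega p q] are the crossings of the segment [L] from [(0,0)]
    to [(q,p)] with the lines [y = j], [x + y = k] and [x = i] carrying the
    horizontal, diagonal and vertical edges, listed along [L]; a crossing point
    determines its edge (through the floors of its coordinates), hence its
    letter.  Two consecutive crossings of the same family are always separated
    by a crossing of another family: between two horizontal lines, say, [L]
    either crosses a vertical line or stays in one column and then crosses a
    diagonal.  Since [gcd(p, q) = 1], [L] passes through no lattice point
    strictly between its ends, so each such line crossing lies in the relative
    interior of an edge.  Hence adjacent letters of [omega p q] never share a
    generator unless they come from the same edge. *)

Definition ekind_code (k : ekind) : nat := match k with EH => 0 | ED => 1 | EV => 2 end%N.
Definition ekind_decode (n : nat) : ekind := match n with 0 => EH | 1 => ED | _ => EV end%N.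
Lemma ekind_codeK : cancel ekind_code ekind_decode. Proof. by case. Qed.
HB.instance Definition _ := Equality.copy ekind (can_type ekind_codeK).

Lemma reduced_sorted d (K : orderType d) (l : seq (K * letter)) :
  sorted (fun a b => (a.1 <= b.1)%O) l ->
  {in l &, forall a b, a.2.1 = b.2.1 -> a.1 = b.1 -> a.2.2 = b.2.2} ->
  {in l &, forall a b, a.2.1 = b.2.1 -> (a.1 < b.1)%O ->
     exists2 c, c \in l & (a.1 < c.1 < b.1)%O} ->
  reduced [seq c.2 | c <- l].
Proof.
elim: l => [|a [|b l] IHl] //= /andP[le_ab sorted_bl] same_sign separated.
have le_b : all (fun c => (b.1 <= c.1)%O) (b :: l).
  by rewrite /= lexx; apply: order_path_min sorted_bl => y x z /le_trans; apply.
have sub_bl : {subset b :: l <= a :: b :: l} by move=> c c_in; rewrite inE c_in orbT.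
have above_a c : c \in a :: b :: l -> (a.1 < c.1)%O -> c \in b :: l.
  by rewrite inE => /orP[/eqP-> | //]; rewrite ltxx.
apply/andP; split.
  apply/negP => /andP[/eqP eq_g neq_sign]; move: le_ab; rewrite le_eqVlt.
  case/orP => [/eqP eq_s | lt_ab].
    by rewrite (same_sign a b) ?eqxx ?inE ?eqxx ?orbT in neq_sign.
  have [c c_in /andP[lt_ac lt_cb]] := separated a b (mem_head _ _)
    (sub_bl _ (mem_head _ _)) eq_g lt_ab.
  by move/allP: le_b => /(_ c (above_a c c_in lt_ac)); rewrite leNgt lt_cb.
apply: IHl => //; first exact: sub_in2 same_sign.
move=> x y x_in y_in eq_g lt_xy.
have [c c_in /andP[lt_xc lt_cy]] := separated x y (sub_bl _ x_in) (sub_bl _ y_in) eq_g lt_xy.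
exists c; rewrite ?lt_xc ?lt_cy //; apply: above_a c_in _.
apply: le_lt_trans lt_xc; apply: le_trans le_ab _.
by move/allP: le_b; apply.
Qed.

Lemma int_num_coprime_mul (p q : nat) (s : rat) : coprime p q ->
  s * p%:R \is a Num.int -> s * q%:R \is a Num.int -> s \is a Num.int.
Proof.
move=> /(coprimezP p q) [[u v] /= bezout] sp_int sq_int.
have bezoutQ : u%:~R * p%:R + v%:~R * q%:R = 1 :> rat.
  by have := congr1 (intmul (1 : rat)) bezout; rewrite intrD !intrM -!pmulrn.
have -> : s = s * p%:R * u%:~R + s * q%:R * v%:~R.
  by rewrite -!mulrA -mulrDr (mulrC p%:R) (mulrC q%:R) bezoutQ mulr1.
apply: rpredD; apply: rpredM => //; exact: intr_int.
Qed.

Lemma eqr_intr_floor (x : rat) (m : int) :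
  (x == m%:~R) = (x \is a Num.int) && (Num.floor x == m).
Proof.
apply/eqP/andP => [-> | [x_int /eqP <-]]; last by rewrite floorK.
by rewrite intr_int intrKfloor.
Qed.

Lemma ltr_intr_floor (x : rat) (m : int) :
  (m%:~R < x < m%:~R + 1) = (x \isn't a Num.int) && (Num.floor x == m).
Proof.
rewrite intrEfloor; apply/andP/andP => [[lt_mx lt_x1] | [+ /eqP fx_m]].
  have fx_m : Num.floor x = m by apply: floor_def; rewrite intrD (ltW lt_mx) lt_x1.
  by rewrite fx_m eqxx lt_eqF.
move: (floor_le x) (floorD1_gt x); rewrite fx_m intrD => le_mx lt_x1 neq_mx.
by rewrite lt_neqAle neq_mx le_mx lt_x1.
Qed.

Lemma ler_intrD1 (a b : int) : a < b -> a%:~R + 1 <= b%:~R :> rat.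
Proof. by rewrite -lezD1 -(ler_int rat) intrD. Qed.

Lemma floor_range (x : rat) (n : nat) : 0 <= x <= n%:R -> -1 <= Num.floor x <= n%:Z.
Proof.
move=> /andP[x_ge0 x_le].
have fx_ge0 : 0 <= Num.floor x by rewrite floor_ge0.
have fx_lt : Num.floor x < n%:Z + 1 by rewrite floor_lt_int intrD -pmulrn; lra.
lia.
Qed.

(* Horizontal edges lie on the lines [y \in Z], diagonal ones on [x + y \in Z],
   vertical ones on [x \in Z]; a point of such a line is interior to an edge iff
   it is not a lattice point. *)
Definition on_edge (g : gen) (x y : rat) : bool :=
  match g with
  | gx => (y \is a Num.int) && (x \isn't a Num.int)
  | gy => (x + y \is a Num.int) && (x \isn't a Num.int)
  | gz => (x \is a Num.int) && (y \isn't a Num.int)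
  end.

Definition gen_kind (g : gen) : ekind := match g with gx => EH | gy => ED | gz => EV end.

Definition edge_at (g : gen) (x y : rat) : edge :=
  (gen_kind g, (Num.floor x, Num.floor y)).

Definition in_edge (e : edge) (x y : rat) : bool :=
  let: (k, (i, j)) := e in
  match k with
  | EH => (y == j%:~R) && (i%:~R < x < i%:~R + 1)
  | ED => (x + y == (i + j + 1)%:~R) && (i%:~R < x < i%:~R + 1)
  | EV => (x == i%:~R) && (j%:~R < y < j%:~R + 1)
  end.

Lemma in_edgeE e x y :
  in_edge e x y = on_edge (edge_gen e) x y && (e == edge_at (edge_gen e) x y).
Proof.
case: e => [[] [i j]]; rewrite /edge_at /= !xpair_eqE eqxx /= (eq_sym i) (eq_sym j).
2: apply/andP/andP => [[/eqP sum_xy lt_ix] |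
                      [/andP[/intrP[k sum_xy] x_nint] /andP[/eqP fx /eqP fy]]].
1,4: rewrite eqr_intr_floor ltr_intr_floor;
  by case: (x \is a Num.int) (y \is a Num.int) (Num.floor x == i) (Num.floor y == j)
    => [] [] [] [].
- move: (lt_ix); rewrite ltr_intr_floor => /andP[x_nint fx].
  rewrite sum_xy intr_int x_nint fx; split=> //; apply/eqP/floor_def.
  by move: sum_xy; rewrite !intrD => sum_xy; lra.
- have := ltr_intr_floor x i; rewrite x_nint fx eqxx => /andP[lt_ix lt_xi1].
  move: (floor_le y) (floorD1_gt y); rewrite fy intrD => le_jy lt_yj1.
  have lt_k : i + j < k < i + j + 2 by rewrite -!(ltr_int rat) -sum_xy !intrD; lra.
  have k_eq : k = i + j + 1 by lia.
  by rewrite sum_xy k_eq eqxx lt_ix lt_xi1.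
Qed.

Lemma edge_gen_at g x y : edge_gen (edge_at g x y) = g.
Proof. by case: g. Qed.

Lemma in_edge_at g x y : on_edge g x y -> in_edge (edge_at g x y) x y.
Proof. by rewrite in_edgeE edge_gen_at eqxx andbT. Qed.

Lemma in_edgeP e x y : let: (A, B) := edge_ends e in
  reflect (exists2 u, 0 < u < 1 & x = A.1 + u * (B.1 - A.1) /\ y = A.2 + u * (B.2 - A.2))
          (in_edge e x y).
Proof.
case: e => [[] [i j]] /=; apply: (iffP andP).
- by case=> /eqP y_j lt_x; exists (x - i%:~R); [|split]; lra.
- by case=> u u_01 [-> ->]; split; [apply/eqP|]; lra.
- case=> /eqP; rewrite !intrD => sum_xy lt_x.
  by exists (x - i%:~R); [|split]; lra.
- by case=> u u_01 [-> ->]; rewrite !intrD; split; [apply/eqP|]; lra.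
- by case=> /eqP x_i lt_y; exists (y - j%:~R); [|split]; lra.
- by case=> u u_01 [-> ->]; split; [apply/eqP|]; lra.
Qed.

Lemma on_edge_exists x y : ~~ ((x \is a Num.int) && (y \is a Num.int)) ->
  [|| x \is a Num.int, y \is a Num.int | x + y \is a Num.int] ->
  exists g, on_edge g x y.
Proof.
case x_int: (x \is a Num.int) => /=.
  by move=> y_nint _; exists gz; rewrite /= x_int.
move=> _ /orP[y_int | sum_int]; first by exists gx; rewrite /= x_int y_int.
by exists gy; rewrite /= x_int sum_int.
Qed.

Lemma int_between_on_edge g x1 y1 x2 y2 : x1 < x2 -> y1 < y2 ->
  on_edge g x1 y1 -> on_edge g x2 y2 -> exists m : int,
  [|| x1 < m%:~R < x2, y1 < m%:~R < y2 | x1 + y1 < m%:~R < x2 + y2].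
Proof.
move=> lt_x lt_y /in_edge_at in1 /in_edge_at in2.
have le_i : Num.floor x1 <= Num.floor x2 by apply/le_floor/ltW.
have le_j : Num.floor y1 <= Num.floor y2 by apply/le_floor/ltW.
move: in1 in2; set i1 := Num.floor x1; set i2 := Num.floor x2.
set j1 := Num.floor y1; set j2 := Num.floor y2.
case: g => /= /andP[/eqP eq1 /andP[lo1 hi1]] /andP[/eqP eq2 /andP[lo2 hi2]].
- have /ler_intrD1 lt_j : j1 < j2 by rewrite -(ltr_int rat) -eq1 -eq2.
  have [/ler_intrD1 lt_i | eq_i] : i1 < i2 \/ i1 = i2 by lia.
    by exists i2; apply/or3P/Or31; apply/andP; split; lra.
  exists (i1 + j1 + 1); apply/or3P/Or33; rewrite !intrD.
  have eq_ir : i1%:~R = i2%:~R :> rat by rewrite eq_i.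
  by apply/andP; split; lra.
- move: eq1 eq2; rewrite !intrD => eq1 eq2.
  have [/ler_intrD1 lt_i | eq_i] : i1 < i2 \/ i1 = i2 by lia.
    by exists i2; apply/or3P/Or31; apply/andP; split; lra.
  have [/ler_intrD1 lt_j | eq_j] : j1 < j2 \/ j1 = j2 by lia.
    by exists j2; apply/or3P/Or32; apply/andP; split; lra.
  have eq_ir : i1%:~R = i2%:~R :> rat by rewrite eq_i.
  have eq_jr : j1%:~R = j2%:~R :> rat by rewrite eq_j.
  (* both points would then lie on the same diagonal [x + y = i1 + j1 + 1] *)
  lra.
- have /ler_intrD1 lt_i : i1 < i2 by rewrite -(ltr_int rat) -eq1 -eq2.
  have [/ler_intrD1 lt_j | eq_j] : j1 < j2 \/ j1 = j2 by lia.
    by exists j2; apply/or3P/Or32; apply/andP; split; lra.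
  exists (i1 + j1 + 1); apply/or3P/Or33; rewrite !intrD.
  have eq_jr : j1%:~R = j2%:~R :> rat by rewrite eq_j.
  by apply/andP; split; lra.
Qed.

Lemma mem_irange (n : nat) (z : int) : -1 <= z <= n%:Z -> z \in irange n.
Proof.
move=> /andP[z_ge z_le]; apply/mapP; exists (absz (z + 1)); last by lia.
by rewrite mem_iota; lia.
Qed.

Lemma mem_candidate_edges (p q : nat) (k : ekind) (i j : int) :
  -1 <= i <= q%:Z -> -1 <= j <= p%:Z -> (k, (i, j)) \in candidate_edges p q.
Proof.
move=> i_range j_range; apply: allpairs_f; first by case: k.
by apply: allpairs_f; apply: mem_irange.
Qed.

Section Crossings.
Variables p q : nat.
Hypotheses (p_gt0 : (0 < p)%N) (q_gt0 : (0 < q)%N).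
Local Notation P := (p%:R : rat).
Local Notation Q := (q%:R : rat).

Lemma cross_paramE e s :
  cross_param p q e = Some s <-> (0 <= s <= 1) && in_edge e (s * Q) (s * P).
Proof.
have P_gt0 : 0 < P by rewrite ltr0n.
have Q_gt0 : 0 < Q by rewrite ltr0n.
(* [cross_param] solves [s (q, p) = A + u (B - A)] by Cramer's rule. *)
have := in_edgeP e (s * Q) (s * P); rewrite /cross_param.
case ends: (edge_ends e) => [[a1 a2] [b1 b2]] /= in_eP.
have det_neq0 : (b1 - a1) * P - Q * (b2 - a2) != 0.
  by case: e ends {in_eP} => [[] [i j]] /= [<- <- <- <-]; apply/eqP; lra.
move: det_neq0 in_eP; set d1 := b1 - a1; set d2 := b2 - a2; clearbody d1 d2.
move=> det_neq0 in_eP; rewrite (negbTE det_neq0).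
split=> [| /andP[s_01 /in_eP[u u_01 [xs ys]]]].
  case: ifP => // /andP[/andP[s_01 lt0u] ltu1] [s_eq]; subst s.
  rewrite s_01 /=; apply/in_eP.
  by exists ((Q * a2 - P * a1) / (d1 * P - Q * d2)); [rewrite lt0u ltu1 | split; field].
have -> : a1 = s * Q - u * d1 by lra.
have -> : a2 = s * P - u * d2 by lra.
have -> : (d1 * (s * P - u * d2) - (s * Q - u * d1) * d2) / (d1 * P - Q * d2) = s by field.
have -> : (Q * (s * P - u * d2) - P * (s * Q - u * d1)) / (d1 * P - Q * d2) = u by field.
by rewrite s_01 u_01.
Qed.

Lemma mem_crossings s g b : ((s, (g, b)) \in crossings p q) =
  [&& 0 <= s <= 1, on_edge g (s * Q) (s * P) & b == edge_sign p q (edge_at g (s * Q) (s * P))].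
Proof.
rewrite /crossings mem_pmap; apply/mapP/and3P => [[e _] | [s_01 on_g /eqP ->]].
  case cross_e: (cross_param p q e) => [s'|] //= [-> -> ->].
  move/cross_paramE: cross_e => /andP[s_01]; rewrite in_edgeE => /andP[on_e /eqP e_at].
  by rewrite -e_at eqxx.
have /andP[s_ge0 s_le1] := s_01.
have sQ_range : 0 <= s * Q <= q%:R by rewrite mulr_ge0 ?ler_piMl.
have sP_range : 0 <= s * P <= p%:R by rewrite mulr_ge0 ?ler_piMl.
exists (edge_at g (s * Q) (s * P)).
  by apply: mem_candidate_edges; apply: floor_range.
have /cross_paramE -> : (0 <= s <= 1) && in_edge (edge_at g (s * Q) (s * P)) (s * Q) (s * P).
  by rewrite s_01 in_edge_at.
by rewrite edge_gen_at.
Qed.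

Lemma crossing_sign_unique s g b1 b2 :
  (s, (g, b1)) \in crossings p q -> (s, (g, b2)) \in crossings p q -> b1 = b2.
Proof. by rewrite !mem_crossings => /and3P[_ _ /eqP ->] /and3P[_ _ /eqP ->]. Qed.

Hypothesis coprime_pq : coprime p q.

Lemma crossing_at s : 0 < s < 1 ->
  [|| s * Q \is a Num.int, s * P \is a Num.int | s * Q + s * P \is a Num.int] ->
  exists2 c, c \in crossings p q & c.1 = s.
Proof.
move=> /andP[s_gt0 s_lt1] on_line.
have not_lattice : ~~ ((s * Q \is a Num.int) && (s * P \is a Num.int)).
  apply/negP => /andP[sQ_int sP_int].
  have /intrP[m s_m] := int_num_coprime_mul coprime_pq sP_int sQ_int.
  by move: s_gt0 s_lt1; rewrite s_m ltr0z ltrz1; lia.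
have [g on_g] := on_edge_exists not_lattice on_line.
exists (s, (g, edge_sign p q (edge_at g (s * Q) (s * P)))) => //.
by rewrite mem_crossings on_g eqxx !ltW.
Qed.

Lemma crossing_between s1 s2 g b1 b2 :
  (s1, (g, b1)) \in crossings p q -> (s2, (g, b2)) \in crossings p q -> s1 < s2 ->
  exists2 c, c \in crossings p q & s1 < c.1 < s2.
Proof.
rewrite !mem_crossings => /and3P[/andP[s1_ge0 _] on1 _] /and3P[/andP[_ s2_le1] on2 _] lt_s.
have P_gt0 : 0 < P by rewrite ltr0n.
have Q_gt0 : 0 < Q by rewrite ltr0n.
have crossing_in s : s1 < s < s2 ->
    [|| s * Q \is a Num.int, s * P \is a Num.int | s * Q + s * P \is a Num.int] ->
    exists2 c, c \in crossings p q & s1 < c.1 < s2.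
  move=> s_in /crossing_at [|c c_in c_s]; last by exists c; rewrite ?c_s.
  by apply/andP; split; lra.
have level_in a (m : int) : 0 < a -> s1 * a < m%:~R < s2 * a ->
    exists2 s, s1 < s < s2 & s * a = m%:~R.
  move=> a_gt0 /andP[lo hi]; exists (m%:~R / a); last by rewrite divfK ?gt_eqF.
  by rewrite ltr_pdivlMr ?ltr_pdivrMr ?lo.
have lt_x : s1 * Q < s2 * Q by rewrite ltr_pM2r.
have lt_y : s1 * P < s2 * P by rewrite ltr_pM2r.
have [m /or3P[m_x | m_y | m_xy]] := int_between_on_edge lt_x lt_y on1 on2.
- have [s s_in s_x] := level_in Q m Q_gt0 m_x.
  by apply: crossing_in s_in _; rewrite s_x intr_int.
- have [s s_in s_y] := level_in P m P_gt0 m_y.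
  by apply: crossing_in s_in _; rewrite s_y intr_int orbT.
- rewrite -!mulrDr in m_xy.
  have [s s_in s_xy] := level_in (Q + P) m (addr_gt0 Q_gt0 P_gt0) m_xy.
  by apply: crossing_in s_in _; rewrite -mulrDr s_xy intr_int !orbT.
Qed.
End Crossings.

Theorem proposition3p3 (p q : nat) : coprime p q -> reduced (omega p q).
Proof.
move=> coprime_pq; have [-> // | p_gt0] := posnP p.
have [-> | q_gt0] := posnP q; first by rewrite /omega; case: (p == 0%N).
rewrite /omega (negbTE (lt0n_neq0 p_gt0)) (negbTE (lt0n_neq0 q_gt0)).
apply: reduced_sorted; first by apply: sort_sorted => a b; apply: le_total.
  move=> [s1 [g1 b1]] [s2 [g2 b2]]; rewrite !mem_sort /= => in1 in2 eq_g eq_s.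
  rewrite -eq_g -eq_s in in2; exact: (crossing_sign_unique p_gt0 q_gt0 in1 in2).
move=> [s1 [g1 b1]] [s2 [g2 b2]]; rewrite !mem_sort /= => in1 in2 eq_g lt_s.
rewrite -eq_g in in2.
have [c c_in c_between] := crossing_between p_gt0 q_gt0 coprime_pq in1 in2 lt_s.
by exists c; rewrite ?mem_sort.
Qed.
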